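(* For every parsummable category $\mathcal C$ (and the fixed injection $\phi\colon\omega\times\omega\to\omega$), the functor $S_{\mathcal C}\colon\Theta(\mathcal C)\to\mathcal C$ is an equivalence of categories. For varying $\mathcal C$, these functors form a natural transformation $\mathrm{forget}\circ\Theta\Rightarrow\mathrm{forget}$ of functors $\mathbf{ParSumCat}\to\mathbf{Cat}$, i.e. $S_{\mathcal D}\circ\Theta(F)=F\circ S_{\mathcal C}$ for every morphism $F\colon\mathcal C\to\mathcal D$ of parsummable categories.
   Context: Let $\omega=\{1,2,\dots\}$, $\mathbf m=\{1,\dots,m\}$, $\mathcal M$ the monoid of injections $\omega\to\omega$. A parsummable category is a small $E\mathcal M$-category (strict action of the chaotic category on $\mathcal M$; $u_*$ the action, $[v,u]\colon u_*\Rightarrow v_*$) all of whose objects have finite support (intersection of finite $A\subset\omega$ with $u_*X=X$ for all $u$ fixing $A$ pointwise), with an object $0$ of empty support and a strictly unital, associative, commutative, equivariant sum on disjointly supported pairs; morphisms ($\mathbf{ParSumCat}$) are equivariant functors preserving $0,+$; $\mathrm{forget}$ is the forgetful functor to $\mathbf{Cat}$. For a finite set $A$, injections $\phi,\phi'\colon A\times\omega\to\omega$ and $X_\bullet=(X_a)_{a\in A}$: $\phi_*(X_\bullet)=\sum_a\phi(a,-)_*(X_a)$, $[\phi',\phi]_{X_\bullet}=\sum_a[\phi'(a,-),\phi(a,-)]_{X_a}$. $\Sigma(\mathcal C)$ is the permutative category with objects finite sequences of objects of $\mathcal C$ (unit the empty sequence $\epsilon$), morphisms $(X_1,\dots,X_m)\to(Y_1,\dots,Y_n)$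 classes $[\psi,f,\phi]$ (injections $\phi\colon\mathbf m\times\omega\to\omega$, $\psi\colon\mathbf n\times\omega\to\omega$, $f\colon\phi_*(X_\bullet)\to\psi_*(Y_\bullet)$) modulo $(\psi,f,\phi)\sim(\psi',[\psi',\psi]f[\phi,\phi'],\phi')$, composition $[\rho,g,\theta][\psi,f,\phi]=[\rho,g[\theta,\psi]f,\phi]$, tensor product concatenation and $[\psi,f,\phi]\otimes[\rho,g,\theta]=[\psi+\rho,f+g,\phi+\theta]$ for disjoint-image representatives, symmetry $[\bar\phi,\mathrm{id},\phi]$; $\Sigma(F)$ applies $F$ entrywise and sends $[\psi,f,\phi]$ to $[\psi,Ff,\phi]$. For a small permutative category $\mathscr P$, $\Phi(\mathscr P)$ is the parsummable category of sequences $(P_1,P_2,\dots)$ with almost all $P_i=\mathbf 1$, morphisms $P\to Q$ being morphisms $\bigotimes_iP_i\to\bigotimes_iQ_i$ in $\mathscr P$; $\Phi(F)$ applies $F$ entrywise and on morphisms. $\Theta(\mathcal C)$ is the full parsummable subcategory of $\Phi\Sigma(\mathcal C)$ on sequences each of whose entries is $\epsilon$ or a $1$-tuple; $\Theta$ is a subfunctor of $\Phi\Sigma$. For finite $A\subset\omega$ and $X_\bullet=(X_a)_{a\in A}$, $\langle A,X_\bullet\rangle$ has $i$-th entry $(X_i)$ for $i\in A$ and $\epsilon$ otherwise; every object of $\Theta(\mathcal C)$ is uniquely of this form. With $\kappa_A\colon\{1,\dots,|A|\}\to A$ the order-preserving bijection and $\kappa_A^*X_\bullet=(X_{\kappa_A(1)},\dots,X_{\kappa_A(|A|)})$,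 a morphism $\langle A,X_\bullet\rangle\to\langle B,Y_\bullet\rangle$ in $\Theta(\mathcal C)$ is a morphism $\kappa_A^*X_\bullet\to\kappa_B^*Y_\bullet$ in $\Sigma(\mathcal C)$. Fix an injection $\phi\colon\omega\times\omega\to\omega$. $S_{\mathcal C}\langle A,X_\bullet\rangle=(\phi|_A)_*(X_\bullet)$ ($\phi|_A$ the restriction to $A\times\omega$); a morphism $\alpha$ has a unique representative $(\phi|_B\circ(\kappa_B\times\mathrm{id}),f,\phi|_A\circ(\kappa_A\times\mathrm{id}))$ and $S_{\mathcal C}(\alpha)=f$; this is a well-defined functor $\Theta(\mathcal C)\to\mathcal C$. *)

From Stdlib Require Import ClassicalEpsilon Relation_Operators.
From mathcomp Require Import all_boot.

Set Implicit Arguments.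
Unset Strict Implicit.
Unset Printing Implicit Defensive.

Record precat := PreCat {
  Ob : Type;
  Hom : Ob -> Ob -> Type;
  idm : forall X, Hom X X;
  comp : forall X Y Z, Hom Y Z -> Hom X Y -> Hom X Z }.
Arguments Hom {p} X Y.
Arguments idm {p} X.
Arguments comp {p X Y Z} g f.

Definition is_category (C : precat) : Prop :=
  (forall (X Y : Ob C) (f : Hom X Y), comp (idm Y) f = f) /\
  (forall (X Y : Ob C) (f : Hom X Y), comp f (idm X) = f) /\
  (forall (X Y Z W : Ob C) (f : Hom X Y) (g : Hom Y Z) (h : Hom Z W),
      comp h (comp g f) = comp (comp h g) f).

Definition castH (C : precat) (X X' Y Y' : Ob C) (e1 : X = X') (e2 : Y = Y')
  (f : Hom X Y) : Hom X' Y' :=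
  match e1 in _ = X1 return Hom X1 Y' with
  | erefl => match e2 in _ = Y1 return Hom X Y1 with erefl => f end
  end.

Definition heq (C : precat) (X Y X' Y' : Ob C) (f : Hom X Y) (g : Hom X' Y') : Prop :=
  exists (e1 : X = X') (e2 : Y = Y'), castH e1 e2 f = g.

Record functor (C D : precat) := Functor {
  fob : Ob C -> Ob D;
  fhom : forall X Y : Ob C, Hom X Y -> Hom (fob X) (fob Y) }.
Arguments fob {C D} f X.
Arguments fhom {C D} f {X Y} g.

Definition is_functor (C D : precat) (F : functor C D) : Prop :=
  (forall X : Ob C, fhom F (idm X) = idm (fob F X)) /\
  (forall (X Y Z : Ob C) (f : Hom X Y) (g : Hom Y Z),
      fhom F (comp g f) = comp (fhom F g) (fhom F f)).

Definition fid (C : precat) : functor C C :=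
  @Functor C C (fun X => X) (fun X Y f => f).
Definition fcomp (C D E : precat) (G : functor D E) (F : functor C D) : functor C E :=
  @Functor C E (fun X => fob G (fob F X)) (fun X Y f => fhom G (fhom F f)).

Definition is_iso (C : precat) (X Y : Ob C) (f : Hom X Y) : Prop :=
  exists g : Hom Y X, comp g f = idm X /\ comp f g = idm Y.

Definition nat_iso (C D : precat) (F G : functor C D) : Prop :=
  exists eta : forall X : Ob C, Hom (fob F X) (fob G X),
    (forall X, is_iso (eta X)) /\
    (forall (X Y : Ob C) (f : Hom X Y), comp (fhom G f) (eta X) = comp (eta Y) (fhom F f)).

Definition is_equivalence (C D : precat) (F : functor C D) : Prop :=
  is_functor F /\
  exists G : functor D C,
    is_functor G /\ nat_iso (fid C) (fcomp G F) /\ nat_iso (fcomp F G) (fid D).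

Record inj := Inj { injf :> nat -> nat; injP : injective injf }.
Definition icomp (u v : inj) : inj := @Inj (u \o v) (inj_comp (@injP u) (@injP v)).
Definition iid : inj := @Inj id (@inj_id nat).

(* Data: a small category, the action of EM (push u = u_*, and
   actm u v f = image of the morphism ((u -> v), f) of EM x C, so that
   [v,u]_X = actm u v (idm X)), the object 0, and the sum functor on
   objects and morphisms (meaningful on disjointly supported pairs). *)
Record psdata := PSData {
  ps_cat :> precat;
  push : inj -> Ob ps_cat -> Ob ps_cat;
  actm : forall (u v : inj) (X Y : Ob ps_cat), Hom X Y -> Hom (push u X) (push v Y);
  zero : Ob ps_cat;
  add : Ob ps_cat -> Ob ps_cat -> Ob ps_cat;
  addm : forall (X X' Y Y' : Ob ps_cat), Hom X X' -> Hom Y Y' -> Hom (add X Y) (add X' Y') }.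
Arguments push {p} u X.
Arguments actm {p} u v {X Y} f.
Arguments zero p : clear implicits.
Arguments add {p} X Y.
Arguments addm {p X X' Y Y'} f g.

Definition brack (C : psdata) (v u : inj) (X : Ob C) : Hom (push u X) (push v X) :=
  actm u v (idm X).

Definition supports (C : psdata) (A : seq nat) (X : Ob C) : Prop :=
  forall u : inj, (forall a, a \in A -> u a = a) -> push u X = X.

Definition supp (C : psdata) (X : Ob C) (i : nat) : Prop :=
  forall A : seq nat, supports A X -> i \in A.

Definition disj (C : psdata) (X Y : Ob C) : Prop :=
  forall i, supp X i -> supp Y i -> False.

Definition is_parsummable (C : psdata) : Prop :=
  is_category C
  /\ (forall (u : inj) (X : Ob C), actm u u (idm X) = idm (push u X))
  /\ (forall (u v w : inj) (X Y Z : Ob C) (f : Hom X Y) (g : Hom Y Z),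
        comp (actm v w g) (actm u v f) = actm u w (comp g f))
  /\ (forall (u v : inj) (X : Ob C), push (icomp u v) X = push u (push v X))
  /\ (forall (u v u' v' : inj) (X Y : Ob C) (f : Hom X Y),
        heq (actm (icomp u u') (icomp v v') f) (actm u v (actm u' v' f)))
  /\ (forall X : Ob C, push iid X = X)
  /\ (forall (X Y : Ob C) (f : Hom X Y), heq (actm iid iid f) f)
  /\ (forall X : Ob C, exists A : seq nat, supports A X)
  /\ (forall i, ~ supp (zero C) i)
  /\ (forall X Y : Ob C, disj X Y -> addm (idm X) (idm Y) = idm (add X Y))
  /\ (forall (X X' X'' Y Y' Y'' : Ob C) (f : Hom X X') (f' : Hom X' X'')
             (g : Hom Y Y') (g' : Hom Y' Y''),
        disj X Y -> disj X' Y' -> disj X'' Y'' ->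
        addm (comp f' f) (comp g' g) = comp (addm f' g') (addm f g))
  /\ (forall X : Ob C, add X (zero C) = X)
  /\ (forall (X X' : Ob C) (f : Hom X X'), heq (addm f (idm (zero C))) f)
  /\ (forall X Y Z : Ob C, disj X Y -> disj X Z -> disj Y Z ->
        add (add X Y) Z = add X (add Y Z))
  /\ (forall (X X' Y Y' Z Z' : Ob C) (f : Hom X X') (g : Hom Y Y') (h : Hom Z Z'),
        disj X Y -> disj X Z -> disj Y Z -> disj X' Y' -> disj X' Z' -> disj Y' Z' ->
        heq (addm (addm f g) h) (addm f (addm g h)))
  /\ (forall X Y : Ob C, disj X Y -> add X Y = add Y X)
  /\ (forall (X X' Y Y' : Ob C) (f : Hom X X') (g : Hom Y Y'),
        disj X Y -> disj X' Y' -> heq (addm f g) (addm g f))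
  /\ (forall (u : inj) (X Y : Ob C), disj X Y -> push u (add X Y) = add (push u X) (push u Y))
  /\ (forall (u v : inj) (X X' Y Y' : Ob C) (f : Hom X X') (g : Hom Y Y'),
        disj X Y -> disj X' Y' ->
        heq (actm u v (addm f g)) (addm (actm u v f) (actm u v g))).

Definition is_psmor (C D : psdata) (F : functor C D) : Prop :=
  is_functor F
  /\ (forall (u : inj) (X : Ob C), fob F (push u X) = push u (fob F X))
  /\ (forall (u v : inj) (X Y : Ob C) (f : Hom X Y),
        heq (fhom F (actm u v f)) (actm u v (fhom F f)))
  /\ fob F (zero C) = zero D
  /\ (forall X Y : Ob C, disj X Y -> fob F (add X Y) = add (fob F X) (fob F Y))
  /\ (forall (X X' Y Y' : Ob C) (f : Hom X X') (g : Hom Y Y'),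
        disj X Y -> disj X' Y' -> heq (fhom F (addm f g)) (addm (fhom F f) (fhom F g))).

Record minj (m : nat) := MInj {
  mfun : 'I_m -> nat -> nat;
  minjP : forall (a b : 'I_m) (k l : nat), mfun a k = mfun b l -> a = b /\ k = l }.

Definition slice (m : nat) (phi : minj m) (a : 'I_m) : inj :=
  @Inj (mfun phi a) (fun k l e => proj2 (@minjP m phi a a k l e)).

Fixpoint osum (C : psdata) (I : Type) (s : seq I) (F : I -> Ob C) : Ob C :=
  match s with [::] => zero C | i :: s' => add (F i) (osum s' F) end.

Fixpoint msum (C : psdata) (I : Type) (s : seq I) (F G : I -> Ob C)
  (h : forall i, Hom (F i) (G i)) {struct s} : Hom (osum s F) (osum s G) :=
  match s as s0 return Hom (osum s0 F) (osum s0 G) with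
  | [::] => idm (zero C)
  | i :: s' => addm (h i) (msum s' h)
  end.

Definition pushsum (C : psdata) (Xs : seq (Ob C)) (phi : minj (size Xs)) : Ob C :=
  osum (enum 'I_(size Xs)) (fun a => push (slice phi a) (nth (zero C) Xs a)).

Definition brk (C : psdata) (Xs : seq (Ob C)) (phi' phi : minj (size Xs)) :
  Hom (pushsum phi) (pushsum phi') :=
  msum (enum 'I_(size Xs)) (fun a => brack (slice phi' a) (slice phi a) (nth (zero C) Xs a)).

Record trip (C : psdata) (Xs Ys : seq (Ob C)) := Trip {
  t_in : minj (size Xs);
  t_out : minj (size Ys);
  t_f : Hom (pushsum t_in) (pushsum t_out) }.

Definition tstep (C : psdata) (Xs Ys : seq (Ob C)) (t t' : trip Xs Ys) : Prop :=
  t_f t' = comp (brk (t_out t') (t_out t)) (comp (t_f t) (brk (t_in t) (t_in t'))).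

Definition tequiv (C : psdata) (Xs Ys : seq (Ob C)) : trip Xs Ys -> trip Xs Ys -> Prop :=
  clos_refl_sym_trans _ (@tstep C Xs Ys).

Definition SMor (C : psdata) (Xs Ys : seq (Ob C)) : Type :=
  { P : trip Xs Ys -> Prop | exists t, forall t', P t' <-> tequiv t t' }.

Definition cls (C : psdata) (Xs Ys : seq (Ob C)) (t : trip Xs Ys) : SMor Xs Ys :=
  exist _ (tequiv t) (ex_intro _ t (fun t' => iff_refl _)).

Definition rep (C : psdata) (Xs Ys : seq (Ob C)) (alpha : SMor Xs Ys) : trip Xs Ys :=
  proj1_sig (constructive_indefinite_description _ (proj2_sig alpha)).

Definition smcomp (C : psdata) (Xs Ys Zs : seq (Ob C))
  (beta : SMor Ys Zs) (alpha : SMor Xs Ys) : SMor Xs Zs :=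
  let r := rep alpha in let q := rep beta in
  cls (@Trip _ _ _ (t_in r) (t_out q) (comp (t_f q) (comp (brk (t_in q) (t_out r)) (t_f r)))).

Record pinj := PInj {
  pf : nat -> nat -> nat;
  pinjP : forall a b k l, pf a k = pf b l -> a = b /\ k = l }.

(* <A, X_.> encoded as the list of pairs (a, X_a), a in A, in increasing order *)
Definition ThOb (C : psdata) : Type :=
  { s : seq (nat * Ob C) | sorted ltn (map fst s) }.

Definition thA (C : psdata) (O : ThOb C) : seq nat := map fst (val O).
Definition thX (C : psdata) (O : ThOb C) : seq (Ob C) := map snd (val O).

Lemma canon_proof (phi : pinj) (C : psdata) (O : ThOb C) :
  forall (a b : 'I_(size (thX O))) (k l : nat),
    pf phi (nth 0 (thA O) a) k = pf phi (nth 0 (thA O) b) l -> a = b /\ k = l.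
Proof.
move=> a b k l /pinjP [eab ekl]; split=> //.
have hu : uniq (thA O) by apply: (sorted_uniq ltn_trans ltnn); exact: (valP O).
have ha : a < size (thA O) by rewrite /thA size_map -(size_map snd); exact: ltn_ord.
have hb : b < size (thA O) by rewrite /thA size_map -(size_map snd); exact: ltn_ord.
apply: val_inj; apply/eqP; by rewrite -(nth_uniq 0 ha hb hu) eab.
Qed.

(* phi|_A o (kappa_A x id) *)
Definition canon (phi : pinj) (C : psdata) (O : ThOb C) : minj (size (thX O)) :=
  @MInj _ (fun a k => pf phi (nth 0 (thA O) a) k) (@canon_proof phi C O).

Definition Theta (phi : pinj) (C : psdata) : precat :=
  @PreCat (ThOb C) (fun O O' => SMor (thX O) (thX O'))
    (fun O => cls (@Trip _ _ _ (canon phi O) (canon phi O) (idm _)))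
    (fun O O' O'' beta alpha => smcomp beta alpha).

Lemma S_rep_ex (phi : pinj) (C : psdata) (O O' : ThOb C) (alpha : SMor (thX O) (thX O')) :
  exists f, proj1_sig alpha (@Trip _ _ _ (canon phi O) (canon phi O') f).
Proof.
case: (proj2_sig alpha) => t Ht.
exists (comp (brk (canon phi O') (t_out t)) (comp (t_f t) (brk (t_in t) (canon phi O)))).
apply/Ht; apply: rst_step; reflexivity.
Qed.

(* S_C(alpha) = f for the representative (phi|_B kappa_B, f, phi|_A kappa_A) *)
Definition S_hom (phi : pinj) (C : psdata) (O O' : ThOb C) (alpha : SMor (thX O) (thX O')) :
  Hom (pushsum (canon phi O)) (pushsum (canon phi O')) :=
  proj1_sig (constructive_indefinite_description _ (S_rep_ex phi alpha)).

Definition S_fun (phi : pinj) (C : psdata) : functor (Theta phi C) C :=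
  @Functor (Theta phi C) C (fun O => pushsum (canon phi O)) (fun O O' alpha => S_hom phi alpha).

Lemma thF_proof (C D : psdata) (F : functor C D) (O : ThOb C) :
  sorted ltn (map fst (map (fun p => (p.1, fob F p.2)) (val O))).
Proof. by rewrite -map_comp; exact: (valP O). Qed.

Definition thF (C D : psdata) (F : functor C D) (O : ThOb C) : ThOb D :=
  exist _ (map (fun p => (p.1, fob F p.2)) (val O)) (thF_proof F O).

Definition sameinj (m m' : nat) (p : minj m) (p' : minj m') : Prop :=
  m = m' /\ forall (a : 'I_m) (a' : 'I_m'), val a = val a' -> mfun p a =1 mfun p' a'.

Definition is_SigmaF_image (C D : psdata) (F : functor C D)
  (Xs Ys : seq (Ob C)) (Xs' Ys' : seq (Ob D))
  (alpha : SMor Xs Ys) (beta : SMor Xs' Ys') : Prop :=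
  exists t : trip Xs Ys, proj1_sig alpha t /\
  exists t' : trip Xs' Ys', proj1_sig beta t' /\
    sameinj (t_in t') (t_in t) /\ sameinj (t_out t') (t_out t) /\
    heq (t_f t') (fhom F (t_f t)).

(** The functor [S] sends [<A, X>] to the sum of the translates [phi(a,-)_* X_a];
    these summands have pairwise disjoint supports, because the support of
    [u_* X] lies in the image of [u] and the slices [phi(a,-)] have disjoint
    images.  Every morphism class of [Sigma(C)] has exactly one representative
    whose injections are the canonical ones [phi|_A o kappa_A]: conjugating any
    representative by brackets moves it there, and brackets compose strictly.
    Hence [S] is fully faithful, and it is essentially surjective since the
    bracket [[id, u]] is an isomorphism [u_* X ~ X].  A morphism [F] commutes
    with translations, sums and brackets, so it carries the canonical
    representative of [alpha] to that of [Sigma(F)(alpha)]. *)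

From Stdlib Require Import ClassicalEpsilon Relation_Operators Classical.
From Stdlib Require Import FunctionalExtensionality ProofIrrelevance PropExtensionality.
From mathcomp Require Import all_boot.

Set Implicit Arguments.
Unset Strict Implicit.
Unset Printing Implicit Defensive.

Lemma heq_refl (C : precat) (X Y : Ob C) (f : Hom X Y) : heq f f.
Proof. by exists erefl, erefl. Qed.

Lemma heq_sym (C : precat) (X Y X' Y' : Ob C) (f : Hom X Y) (g : Hom X' Y') :
  heq f g -> heq g f.
Proof. by case=> e1 [e2]; subst => /= <-; exact: heq_refl. Qed.

Lemma heq_trans (C : precat) (X Y X' Y' X'' Y'' : Ob C)
    (f : Hom X Y) (g : Hom X' Y') (h : Hom X'' Y'') :
  heq f g -> heq g h -> heq f h.
Proof. by case=> e1 [e2]; subst => /= <-. Qed.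

Lemma heq_castH (C : precat) (X X' Y Y' : Ob C) (e1 : X = X') (e2 : Y = Y')
    (f : Hom X Y) :
  heq f (castH e1 e2 f).
Proof. by exists e1, e2. Qed.

Lemma heq_idm (C : precat) (X Y : Ob C) : X = Y -> heq (idm X) (idm Y).
Proof. by move=> ->; exact: heq_refl. Qed.

Lemma heq_comp (C : precat) (X Y Z X' Y' Z' : Ob C) (f : Hom X Y) (g : Hom Y Z)
    (f' : Hom X' Y') (g' : Hom Y' Z') :
  heq f f' -> heq g g' -> heq (comp g f) (comp g' f').
Proof.
case=> e1 [e2]; subst => /= <-; case=> e1 [e2]; subst => /=.
by rewrite (proof_irrelevance _ e1 erefl) /= => <-; exact: heq_refl.
Qed.

Lemma castH_idm (C : precat) (X Y : Ob C) (e : X = Y) : castH e e (idm X) = idm Y.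
Proof. by case: Y / e. Qed.

Lemma castH_comp (C : precat) (X Y Z X' Y' Z' : Ob C)
    (e1 : X = X') (e2 : Y = Y') (e3 : Z = Z') (f : Hom X Y) (g : Hom Y Z) :
  castH e1 e3 (comp g f) = comp (castH e2 e3 g) (castH e1 e2 f).
Proof. by case: X' / e1; case: Y' / e2; case: Z' / e3. Qed.

Lemma heq_addm (C : psdata) (X X' Y Y' X1 X1' Y1 Y1' : Ob C)
    (f : Hom X X') (g : Hom Y Y') (f1 : Hom X1 X1') (g1 : Hom Y1 Y1') :
  heq f f1 -> heq g g1 -> heq (addm f g) (addm f1 g1).
Proof.
case=> e1 [e2]; subst => /= <-.
by case=> e1 [e2]; subst => /= <-; exact: heq_refl.
Qed.

Lemma heq_actm (C : psdata) (u v : inj) (X Y X' Y' : Ob C)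
    (f : Hom X Y) (f' : Hom X' Y') :
  heq f f' -> heq (actm u v f) (actm u v f').
Proof. by case=> e1 [e2]; subst => /= <-; exact: heq_refl. Qed.

Section QuasiInverse.

Variables (T C : precat) (S : functor T C).
Hypothesis catC : is_category C.
Hypothesis functorS : is_functor S.
Hypothesis faithfulS : forall (X Y : Ob T) (f g : Hom X Y), fhom S f = fhom S g -> f = g.
Variable preim : forall X Y : Ob T, Hom (fob S X) (fob S Y) -> Hom X Y.
Hypothesis preimK : forall (X Y : Ob T) (h : Hom (fob S X) (fob S Y)), fhom S (preim h) = h.
Variable G : Ob C -> Ob T.
Variables (eps : forall Y, Hom (fob S (G Y)) Y) (eps' : forall Y, Hom Y (fob S (G Y))).
Hypothesis epsK : forall Y, comp (eps' Y) (eps Y) = idm _.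
Hypothesis eps'K : forall Y, comp (eps Y) (eps' Y) = idm Y.

Let idl := proj1 catC.
Let idr := proj1 (proj2 catC).
Let assoc := proj2 (proj2 catC).

Definition quasi_inv : functor C T :=
  @Functor C T G (fun Y Y' g => preim (comp (eps' Y') (comp g (eps Y)))).

Lemma quasi_inv_functor : is_functor quasi_inv.
Proof.
split=> [Y | Y Y' Y'' g g']; apply: faithfulS => /=.
  by rewrite preimK (proj1 functorS) idl.
rewrite (proj2 functorS) !preimK -!assoc; congr comp; congr comp.
by rewrite assoc eps'K idl.
Qed.

Lemma quasi_inv_unit : nat_iso (fid T) (fcomp quasi_inv S).
Proof.
exists (fun X => preim (eps' (fob S X))); split=> [X | X Y f].
  exists (preim (eps (fob S X))).
  by split; apply: faithfulS; rewrite (proj2 functorS) !preimK (proj1 functorS) ?epsK ?eps'K.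
apply: faithfulS => /=; rewrite !(proj2 functorS) !preimK -!assoc.
by congr comp; rewrite eps'K idr.
Qed.

Lemma quasi_inv_counit : nat_iso (fcomp S quasi_inv) (fid C).
Proof.
exists eps; split=> [Y | Y Y' g]; first exact: ex_intro _ (eps' Y) (conj (epsK Y) (eps'K Y)).
by rewrite /= preimK assoc eps'K idl.
Qed.

Lemma equivalence_of_quasi_inv : is_equivalence S.
Proof.
split=> //; exists quasi_inv.
by split; [exact: quasi_inv_functor | split; [exact: quasi_inv_unit | exact: quasi_inv_counit]].
Qed.

End QuasiInverse.

Lemma inj_ext (u v : inj) : u =1 v -> u = v.
Proof.
case: u => f fP; case: v => g gP /= /functional_extensionality e; subst.
by rewrite (proof_irrelevance _ fP gP).
Qed.

Definition transpn (b c n : nat) : nat := if n == b then c else if n == c then b else n.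

Lemma transpnK b c : involutive (transpn b c).
Proof.
move=> n; rewrite /transpn.
case: (eqVneq n b) => [->|nb].
  by rewrite eqxx; case: (eqVneq c b) => [->|cb]; rewrite ?eqxx // (negbTE cb) eqxx.
case: (eqVneq n c) => [->|nc]; first by rewrite eqxx.
by rewrite (negbTE nb) (negbTE nc).
Qed.

Lemma inj_extend_bij (A : seq nat) (u : nat -> nat) : injective u ->
  exists w winv : nat -> nat, [/\ cancel w winv, cancel winv w & {in A, w =1 u}].
Proof.
move=> uI; elim: A => [|a A [w [winv [wK winvK wA]]]]; first by exists id, id.
exists (transpn (w a) (u a) \o w), (winv \o transpn (w a) (u a)); split.
- by move=> n /=; rewrite transpnK wK.
- by move=> n /=; rewrite winvK transpnK.
move=> x; rewrite inE => /predU1P [-> | xA] /=; first by rewrite /transpn eqxx.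
rewrite /transpn; case: (eqVneq x a) => [->|xa]; first by rewrite eqxx.
have wxa : w x != w a by apply: contra xa => /eqP /(can_inj wK) ->.
have wxua : w x != u a by rewrite (wA x xA); apply: contra xa => /eqP /uI ->.
by rewrite (negbTE wxa) (negbTE wxua) (wA x xA).
Qed.

Section Parsummable.

Variable C : psdata.
Hypothesis HC : is_parsummable C.

Lemma c_idl (X Y : Ob C) (f : Hom X Y) : comp (idm Y) f = f.
Proof. by case: HC => [[h _] _]. Qed.
Lemma c_idr (X Y : Ob C) (f : Hom X Y) : comp f (idm X) = f.
Proof. by case: HC => [[_ [h _]] _]. Qed.
Lemma c_assoc (X Y Z W : Ob C) (f : Hom X Y) (g : Hom Y Z) (h : Hom Z W) :
  comp (comp h g) f = comp h (comp g f).
Proof. by case: HC => [[_ [_ h']] _]; rewrite h'. Qed.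
Lemma actm_id (u : inj) (X : Ob C) : actm u u (idm X) = idm (push u X).
Proof. by case: HC => [_ [h _]]. Qed.
Lemma actm_comp (u v w : inj) (X Y Z : Ob C) (f : Hom X Y) (g : Hom Y Z) :
  comp (actm v w g) (actm u v f) = actm u w (comp g f).
Proof. by case: HC => [_ [_ [h _]]]. Qed.
Lemma push_comp (u v : inj) (X : Ob C) : push (icomp u v) X = push u (push v X).
Proof. by case: HC => [_ [_ [_ [h _]]]]. Qed.
Lemma push_iid (X : Ob C) : push iid X = X.
Proof. by case: HC => [_ [_ [_ [_ [_ [h _]]]]]]. Qed.
Lemma fin_supports (X : Ob C) : exists A : seq nat, supports A X.
Proof. by case: HC => [_ [_ [_ [_ [_ [_ [_ [h _]]]]]]]]. Qed.
Lemma supp_zero i : ~ supp (zero C) i.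
Proof. by case: HC => [_ [_ [_ [_ [_ [_ [_ [_ [h _]]]]]]]]]. Qed.
Lemma addm_id (X Y : Ob C) : disj X Y -> addm (idm X) (idm Y) = idm (add X Y).
Proof. by case: HC => [_ [_ [_ [_ [_ [_ [_ [_ [_ [h _]]]]]]]]]]; apply: h. Qed.
Lemma addm_comp (X X' X'' Y Y' Y'' : Ob C) (f : Hom X X') (f' : Hom X' X'')
    (g : Hom Y Y') (g' : Hom Y' Y'') :
  disj X Y -> disj X' Y' -> disj X'' Y'' ->
  addm (comp f' f) (comp g' g) = comp (addm f' g') (addm f g).
Proof. by case: HC => [_ [_ [_ [_ [_ [_ [_ [_ [_ [_ [h _]]]]]]]]]]]; apply: h. Qed.
Lemma add_zero (X : Ob C) : add X (zero C) = X.
Proof. by case: HC => [_ [_ [_ [_ [_ [_ [_ [_ [_ [_ [_ [h _]]]]]]]]]]]]. Qed.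
Lemma push_add (u : inj) (X Y : Ob C) :
  disj X Y -> push u (add X Y) = add (push u X) (push u Y).
Proof.
by case: HC => [_ [_ [_ [_ [_ [_ [_ [_ [_ [_ [_ [_ [_ [_ [_ [_ [_ [h _]]]]]]]]]]]]]]]]]]; apply: h.
Qed.

(* Write [u] as [w o s] with [w] a bijection extending [u|_A], so [s] fixes [A]. *)
Lemma push_agree (A : seq nat) (X : Ob C) (u v : inj) :
  supports A X -> {in A, u =1 v} -> push u X = push v X.
Proof.
move=> sA uv; have [w [winv [wK winvK wA]]] := inj_extend_bij A (@injP u).
pose W := Inj (can_inj wK).
have pushW (z : inj) : {in A, z =1 u} -> push z X = push W X.
  move=> zu; pose s := Inj (inj_comp (can_inj winvK) (@injP z)).
  have -> : z = icomp W s by apply: inj_ext => n /=; rewrite winvK.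
  rewrite push_comp; congr push; apply: sA => a aA /=.
  by rewrite zu // -(wA a aA) wK.
by rewrite pushW // (pushW v) // => a aA; rewrite uv.
Qed.

Lemma supports_push (A : seq nat) (X : Ob C) (u : inj) :
  supports A X -> supports (map u A) (push u X).
Proof.
move=> sA w wf; rewrite -push_comp; apply: (push_agree sA) => a aA /=.
by apply: wf; exact: map_f.
Qed.

Lemma supp_push (u : inj) (X : Ob C) i : supp (push u X) i -> exists n, i = u n.
Proof.
have [A sA] := fin_supports X.
by move=> /(_ _ (supports_push (u := u) sA)) /mapP [n _ ->]; exists n.
Qed.

Lemma supports_add (A B : seq nat) (X Y : Ob C) :
  disj X Y -> supports A X -> supports B Y -> supports (A ++ B) (add X Y).
Proof.
move=> dXY sA sB u uf; rewrite push_add // sA ?sB // => a aAB; apply: uf;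
  by rewrite mem_cat aAB ?orbT.
Qed.

Lemma not_supp (X : Ob C) i : ~ supp X i -> exists2 A, supports A X & i \notin A.
Proof.
move=> nX; apply: NNPP => noA; apply: nX => A sA.
by apply: NNPP => iA; apply: noA; exists A => //; apply/negP.
Qed.

Lemma supp_add (X Y : Ob C) i : disj X Y -> supp (add X Y) i -> supp X i \/ supp Y i.
Proof.
move=> dXY suppi; apply: NNPP => /not_or_and [/not_supp [A sA iA] /not_supp [B sB iB]].
by move: (suppi _ (supports_add dXY sA sB)); rewrite mem_cat (negbTE iA) (negbTE iB).
Qed.

Fixpoint disj_summands (I : Type) (s : seq I) (F : I -> Ob C) : Prop :=
  if s is i :: s' then disj (F i) (osum s' F) /\ disj_summands s' F else True.

Lemma disj_summands_regions (I : eqType) (s : seq I) (F : I -> Ob C) (R : I -> nat -> Prop) :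
  (forall i k, supp (F i) k -> R i k) -> (forall i j k, R i k -> R j k -> i = j) -> uniq s ->
  disj_summands s F /\ (forall k, supp (osum s F) k -> exists2 i, i \in s & R i k).
Proof.
move=> suppR Rdisj; elim: s => [|a s IH] /=; first by split=> // k /supp_zero.
case/andP => a_s us; have [djs supps] := IH us.
have da : disj (F a) (osum s F).
  move=> k /suppR Ra /supps [i i_s Ri].
  by move: a_s; rewrite (Rdisj _ _ _ Ra Ri) i_s.
split=> // k /(supp_add da) [/suppR Rak | /supps [i i_s Rik]].
  by exists a; rewrite ?mem_head.
by exists i; rewrite // inE i_s orbT.
Qed.

Lemma msum_id (I : Type) (s : seq I) (F : I -> Ob C) :
  disj_summands s F -> msum s (fun i => idm (F i)) = idm (osum s F).
Proof. by elim: s => [|a s IH] //= [da ds]; rewrite IH // addm_id. Qed.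

Lemma msum_comp (I : Type) (s : seq I) (F G H : I -> Ob C)
    (f : forall i, Hom (F i) (G i)) (g : forall i, Hom (G i) (H i)) :
  disj_summands s F -> disj_summands s G -> disj_summands s H ->
  msum s (fun i => comp (g i) (f i)) = comp (msum s g) (msum s f).
Proof.
elim: s => [|a s IH] /=; first by rewrite c_idl.
by move=> [dF1 dF2] [dG1 dG2] [dH1 dH2]; rewrite IH // addm_comp.
Qed.

Lemma disj_pushsum_summands (Xs : seq (Ob C)) (p : minj (size Xs)) :
  disj_summands (enum 'I_(size Xs)) (fun a => push (slice p a) (nth (zero C) Xs a)).
Proof.
apply: (proj1 (disj_summands_regions (R := fun a k => exists n, k = mfun p a n) _ _ _)).
- by move=> a k /supp_push [n ->]; exists n.
- by move=> a b k [n ->] [m /esym /minjP [-> _]].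
- exact: enum_uniq.
Qed.

Lemma brk_id (Xs : seq (Ob C)) (p : minj (size Xs)) : brk p p = idm (pushsum p).
Proof.
rewrite /brk /brack -msum_id; last exact: disj_pushsum_summands.
by congr msum; apply: functional_extensionality_dep => a; rewrite actm_id.
Qed.

Lemma brk_comp (Xs : seq (Ob C)) (p0 p1 p2 : minj (size Xs)) :
  comp (brk p2 p1) (brk p1 p0) = brk p2 p0.
Proof.
rewrite /brk -(msum_comp _ _ (disj_pushsum_summands p0) (disj_pushsum_summands p1)
  (disj_pushsum_summands p2)).
by congr msum; apply: functional_extensionality_dep => a; rewrite /brack actm_comp c_idl.
Qed.

Lemma brk_compA (Xs : seq (Ob C)) (p0 p1 p2 : minj (size Xs)) (Z : Ob C)
    (h : Hom Z (pushsum p0)) :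
  comp (brk p2 p1) (comp (brk p1 p0) h) = comp (brk p2 p0) h.
Proof. by rewrite -c_assoc brk_comp. Qed.

Lemma iso_brk_push (Z X : Ob C) (u : inj) (E : Z = push u X) :
  let e := castH (esym E) (push_iid X) (brack iid u X) in
  let e' := castH (push_iid X) (esym E) (brack u iid X) in
  comp e' e = idm Z /\ comp e e' = idm X.
Proof.
by split; rewrite -castH_comp /brack actm_comp c_idl actm_id castH_idm.
Qed.

(* The morphism [f'] with [t ~ (q, f', p)], as in the relation generating [tequiv]. *)
Definition reframe (Xs Ys : seq (Ob C)) (p : minj (size Xs)) (q : minj (size Ys))
    (t : trip Xs Ys) : Hom (pushsum p) (pushsum q) :=
  comp (brk q (t_out t)) (comp (t_f t) (brk (t_in t) p)).

Lemma reframe_tequiv (Xs Ys : seq (Ob C)) p q (t t' : trip Xs Ys) :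
  tequiv t t' -> reframe p q t = reframe p q t'.
Proof.
elim=> {t t'} [t t' step | // | t t' _ -> // | t t' t'' _ -> _ -> //].
by rewrite /reframe step !c_assoc brk_compA brk_comp.
Qed.

Lemma reframe_Trip (Xs Ys : seq (Ob C)) p q (f : Hom (pushsum p) (pushsum q)) :
  reframe p q (@Trip _ Xs Ys p q f) = f.
Proof. by rewrite /reframe /= !brk_id c_idl c_idr. Qed.

Lemma tequiv_reframe (Xs Ys : seq (Ob C)) p q (t : trip Xs Ys) :
  tequiv t (@Trip _ Xs Ys p q (reframe p q t)).
Proof. exact: rst_step. Qed.

Lemma tequiv_sym (Xs Ys : seq (Ob C)) (t t' : trip Xs Ys) : tequiv t t' -> tequiv t' t.
Proof. exact: rst_sym. Qed.

Lemma tequiv_trans (Xs Ys : seq (Ob C)) (t t' t'' : trip Xs Ys) :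
  tequiv t t' -> tequiv t' t'' -> tequiv t t''.
Proof. exact: rst_trans. Qed.

Lemma SMor_memE (Xs Ys : seq (Ob C)) (alpha : SMor Xs Ys) t :
  proj1_sig alpha t -> forall t', proj1_sig alpha t' <-> tequiv t t'.
Proof.
case: alpha => P [t0 P_t0] /= Pt t'; rewrite P_t0; move: Pt; rewrite P_t0 => t0t.
by split=> h; [apply: tequiv_trans (tequiv_sym t0t) h | apply: tequiv_trans t0t h].
Qed.

Lemma SMor_ext (Xs Ys : seq (Ob C)) (a b : SMor Xs Ys) :
  (forall t, proj1_sig a t <-> proj1_sig b t) -> a = b.
Proof.
case: a => P pP; case: b => Q pQ /= PQ.
have e : P = Q by apply: functional_extensionality => t; apply: propositional_extensionality.
by subst; congr exist; apply: proof_irrelevance.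
Qed.

Lemma reframe_SMor (Xs Ys : seq (Ob C)) p q (alpha : SMor Xs Ys) t t' :
  proj1_sig alpha t -> proj1_sig alpha t' -> reframe p q t = reframe p q t'.
Proof. by move=> at_ /(SMor_memE at_) /reframe_tequiv. Qed.

Lemma SMor_reframe_inj (Xs Ys : seq (Ob C)) p q (a b : SMor Xs Ys) t t' :
  proj1_sig a t -> proj1_sig b t' -> reframe p q t = reframe p q t' -> a = b.
Proof.
move=> a_t b_t' e; apply: SMor_ext => x; rewrite (SMor_memE a_t) (SMor_memE b_t').
have tt' : tequiv t t'.
  by apply: tequiv_trans (tequiv_reframe p q t) _; rewrite e; apply/tequiv_sym/tequiv_reframe.
by split=> h; [apply: tequiv_trans (tequiv_sym tt') h | apply: tequiv_trans tt' h].
Qed.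

Lemma rep_mem (Xs Ys : seq (Ob C)) (alpha : SMor Xs Ys) : proj1_sig alpha (rep alpha).
Proof. by rewrite /rep; case: constructive_indefinite_description => t /= ->; exact: rst_refl. Qed.

Lemma cls_mem (Xs Ys : seq (Ob C)) (t : trip Xs Ys) : proj1_sig (cls t) t.
Proof. exact: rst_refl. Qed.

Variable phi : pinj.

Lemma S_homE (O O' : ThOb C) (alpha : SMor (thX O) (thX O')) t :
  proj1_sig alpha t -> S_hom phi alpha = reframe (canon phi O) (canon phi O') t.
Proof.
move=> alpha_t; rewrite /S_hom; case: constructive_indefinite_description => f alpha_f /=.
by rewrite -(reframe_SMor _ _ alpha_f alpha_t) reframe_Trip.
Qed.

Lemma S_hom_cls (O O' : ThOb C) (f : Hom (pushsum (canon phi O)) (pushsum (canon phi O'))) :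
  S_hom phi (cls (@Trip _ _ _ (canon phi O) (canon phi O') f)) = f.
Proof. by rewrite (S_homE (cls_mem _)) reframe_Trip. Qed.

Lemma S_fun_functor : is_functor (S_fun phi C).
Proof.
split=> [O | O O' O'' a b] /=; first exact: S_hom_cls.
rewrite /smcomp (S_homE (cls_mem _)) (S_homE (rep_mem a)) (S_homE (rep_mem b)).
by rewrite /reframe /= !c_assoc brk_compA.
Qed.

Lemma S_fun_faithful (O O' : ThOb C) (a b : @Hom (Theta phi C) O O') :
  fhom (S_fun phi C) a = fhom (S_fun phi C) b -> a = b.
Proof.
rewrite /= (S_homE (rep_mem a)) (S_homE (rep_mem b)).
exact: SMor_reframe_inj (rep_mem a) (rep_mem b).
Qed.

Definition singleton_ob (X : Ob C) : ThOb C := exist _ [:: (0, X)] isT.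

Lemma S_singleton_ob (X : Ob C) :
  fob (S_fun phi C) (singleton_ob X) = push (slice (canon phi (singleton_ob X)) ord0) X.
Proof. by rewrite /= /pushsum /= enum_ordSl enum_ord0 /= add_zero. Qed.

Lemma S_fun_equivalence : is_equivalence (S_fun phi C).
Proof.
have E := S_singleton_ob.
apply: (equivalence_of_quasi_inv (proj1 HC) S_fun_functor S_fun_faithful S_hom_cls
  (eps := fun X => castH (esym (E X)) (push_iid X) (brack iid _ X))
  (eps' := fun X => castH (push_iid X) (esym (E X)) (brack _ iid X))) => X.
- exact: (iso_brk_push (E X)).1.
- exact: (iso_brk_push (E X)).2.
Qed.

End Parsummable.

Lemma msum_heq (C : psdata) (I : eqType) (s : seq I) (F G F' G' : I -> Ob C)
    (h : forall i, Hom (F i) (G i)) (h' : forall i, Hom (F' i) (G' i)) :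
  (forall i, i \in s -> heq (h i) (h' i)) -> heq (msum s h) (msum s h').
Proof.
elim: s => [|a s IH] hh' /=; first exact: heq_refl.
apply: heq_addm; first by apply: hh'; rewrite mem_head.
by apply: IH => i i_s; apply: hh'; rewrite inE i_s orbT.
Qed.

Lemma osum_ext (C : psdata) (I : eqType) (s : seq I) (F F' : I -> Ob C) :
  {in s, F =1 F'} -> osum s F = osum s F'.
Proof.
elim: s => [|a s IH] FF' //=.
by rewrite FF' ?mem_head // IH // => i i_s; apply: FF'; rewrite inE i_s orbT.
Qed.

Lemma osum_map (C : psdata) (I J : Type) (f : J -> I) (s : seq J) (F : I -> Ob C) :
  osum (map f s) F = osum s (fun j => F (f j)).
Proof. by elim: s => //= a s ->. Qed.

Lemma msum_map (C : psdata) (I J : Type) (f : J -> I) (s : seq J) (F G : I -> Ob C)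
    (h : forall i, Hom (F i) (G i)) :
  heq (msum (map f s) h) (msum s (fun j => h (f j))).
Proof.
elim: s => [|a s IH] /=; first exact: heq_refl.
by apply: heq_addm => //; exact: heq_refl.
Qed.

(* Slices indexed by [nat] rather than ['I_m], so that injections of equal
   but not convertible arities can be compared. *)
Definition slice_nat (m : nat) (p : minj m) (i : nat) : inj :=
  if insub i is Some a then slice p a else iid.

Lemma slice_nat_val (m : nat) (p : minj m) (a : 'I_m) : slice_nat p (val a) = slice p a.
Proof. by rewrite /slice_nat valK. Qed.

Lemma slice_nat_sameinj (m m' : nat) (p' : minj m') (p : minj m) i :
  sameinj p' p -> slice_nat p' i = slice_nat p i.
Proof.
case=> e p'p; subst m'; rewrite /slice_nat; case: (ltnP i m) => [lt|ge].
  by rewrite (insubT (fun i => i < m) lt); apply: inj_ext => n /=; apply: p'p.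
by rewrite !insubN // -leqNgt.
Qed.

Lemma pushsum_iota (C : psdata) (Xs : seq (Ob C)) (p : minj (size Xs)) :
  pushsum p = osum (iota 0 (size Xs)) (fun i => push (slice_nat p i) (nth (zero C) Xs i)).
Proof.
by rewrite /pushsum -val_enum_ord osum_map; apply: osum_ext => a _; rewrite slice_nat_val.
Qed.

Lemma brk_iota (C : psdata) (Xs : seq (Ob C)) (q p : minj (size Xs)) :
  heq (brk q p)
    (msum (iota 0 (size Xs)) (fun i => brack (slice_nat q i) (slice_nat p i) (nth (zero C) Xs i))).
Proof.
rewrite -val_enum_ord; apply: heq_trans (heq_sym (msum_map _ _ _)).
by apply: msum_heq => a _; rewrite !slice_nat_val; exact: heq_refl.
Qed.

Definition mcast (m n : nat) (e : n = m) (p : minj m) : minj n :=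
  @MInj n (fun a k => mfun p (cast_ord e a) k)
    (fun a b k l pab => let: conj ab kl := minjP pab in conj (cast_ord_inj ab) kl).

Lemma mcast_sameinj (m n : nat) (e : n = m) (p : minj m) : sameinj (mcast e p) p.
Proof. by split=> // a' a a'a k /=; congr mfun; apply: val_inj; rewrite /= a'a. Qed.

Section Naturality.

Variables C D : psdata.
Hypothesis HC : is_parsummable C.
Hypothesis HD : is_parsummable D.
Variable F : functor C D.
Hypothesis HF : is_psmor F.

Lemma F_idm (X : Ob C) : fhom F (idm X) = idm (fob F X).
Proof. by case: HF => [[h _] _]. Qed.
Lemma F_comp (X Y Z : Ob C) (f : Hom X Y) (g : Hom Y Z) :
  fhom F (comp g f) = comp (fhom F g) (fhom F f).
Proof. by case: HF => [[_ h] _]. Qed.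
Lemma F_push (u : inj) (X : Ob C) : fob F (push u X) = push u (fob F X).
Proof. by case: HF => [_ [h _]]. Qed.
Lemma F_actm (u v : inj) (X Y : Ob C) (f : Hom X Y) :
  heq (fhom F (actm u v f)) (actm u v (fhom F f)).
Proof. by case: HF => [_ [_ [h _]]]. Qed.
Lemma F_zero : fob F (zero C) = zero D.
Proof. by case: HF => [_ [_ [_ [h _]]]]. Qed.
Lemma F_add (X Y : Ob C) : disj X Y -> fob F (add X Y) = add (fob F X) (fob F Y).
Proof. by case: HF => [_ [_ [_ [_ [h _]]]]]; apply: h. Qed.
Lemma F_addm (X X' Y Y' : Ob C) (f : Hom X X') (g : Hom Y Y') :
  disj X Y -> disj X' Y' -> heq (fhom F (addm f g)) (addm (fhom F f) (fhom F g)).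
Proof. by case: HF => [_ [_ [_ [_ [_ h]]]]]; apply: h. Qed.

Lemma F_osum (I : Type) (s : seq I) (G : I -> Ob C) :
  disj_summands s G -> fob F (osum s G) = osum s (fun i => fob F (G i)).
Proof.
elim: s => [|a s IH] /=; first by rewrite F_zero.
by case=> da ds; rewrite F_add // IH.
Qed.

Lemma F_msum (I : Type) (s : seq I) (G H : I -> Ob C) (h : forall i, Hom (G i) (H i)) :
  disj_summands s G -> disj_summands s H ->
  heq (fhom F (msum s h)) (msum s (fun i => fhom F (h i))).
Proof.
elim: s => [|a s IH] /=; first by rewrite F_idm; move=> _ _; apply: heq_idm; exact: F_zero.
case=> dG1 dG2 [dH1 dH2]; apply: heq_trans (F_addm _ _ dG1 dH1) _.
by apply: heq_addm; [exact: heq_refl | exact: IH].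
Qed.

Lemma F_pushsum (Zs : seq (Ob C)) (q : minj (size Zs)) :
  fob F (pushsum q)
  = osum (iota 0 (size Zs)) (fun i => push (slice_nat q i) (fob F (nth (zero C) Zs i))).
Proof.
rewrite /pushsum F_osum; last exact: disj_pushsum_summands.
by rewrite -val_enum_ord osum_map; apply: osum_ext => a _; rewrite slice_nat_val F_push.
Qed.

Lemma pushsum_F (Zs : seq (Ob C)) (Ys : seq (Ob D)) (q' : minj (size Ys)) (q : minj (size Zs)) :
  Ys = map (fob F) Zs -> sameinj q' q -> pushsum q' = fob F (pushsum q).
Proof.
move=> YsE q'q; rewrite F_pushsum pushsum_iota; subst Ys.
rewrite [in iota _ _]size_map; apply: osum_ext => i; rewrite mem_iota => /andP [_ iZs].
by rewrite (slice_nat_sameinj i q'q) (nth_map (zero C)) // F_zero.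
Qed.

Lemma brk_F (Zs : seq (Ob C)) (Ys : seq (Ob D)) (q1' q2' : minj (size Ys))
    (q1 q2 : minj (size Zs)) :
  Ys = map (fob F) Zs -> sameinj q1' q1 -> sameinj q2' q2 ->
  heq (brk q1' q2') (fhom F (brk q1 q2)).
Proof.
move=> YsE q1'q1 q2'q2; apply: heq_trans (brk_iota _ _) _; apply: heq_sym.
apply: heq_trans (F_msum _ (disj_pushsum_summands HC q2) (disj_pushsum_summands HC q1)) _.
subst Ys; rewrite [in iota _ _]size_map -val_enum_ord.
apply: heq_trans (heq_sym (msum_map _ _ _)); apply: msum_heq => a _ /=.
rewrite /brack (slice_nat_sameinj _ q1'q1) (slice_nat_sameinj _ q2'q2) !slice_nat_val.
apply: heq_trans (F_actm _ _ _) _; rewrite F_idm; apply/heq_actm/heq_idm.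
by rewrite (nth_map (zero C)).
Qed.

Lemma reframe_F (Zs Ws : seq (Ob C)) (Xs Ys : seq (Ob D))
    (p : minj (size Zs)) (q : minj (size Ws)) (p' : minj (size Xs)) (q' : minj (size Ys))
    (t : trip Zs Ws) (t' : trip Xs Ys) :
  Xs = map (fob F) Zs -> Ys = map (fob F) Ws -> sameinj p' p -> sameinj q' q ->
  sameinj (t_in t') (t_in t) -> sameinj (t_out t') (t_out t) -> heq (t_f t') (fhom F (t_f t)) ->
  heq (reframe p' q' t') (fhom F (reframe p q t)).
Proof.
move=> XsE YsE p'p q'q tin tout tf; rewrite /reframe !F_comp.
by apply: heq_comp; [apply: heq_comp => //; apply: brk_F | apply: brk_F].
Qed.

Lemma SigmaF_image_exists (Zs Ws : seq (Ob C)) (Xs Ys : seq (Ob D)) (alpha : SMor Zs Ws) :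
  Xs = map (fob F) Zs -> Ys = map (fob F) Ws ->
  exists beta : SMor Xs Ys, is_SigmaF_image F alpha beta.
Proof.
move=> XsE YsE; pose t := rep alpha.
have szX : size Xs = size Zs by rewrite XsE size_map.
have szY : size Ys = size Ws by rewrite YsE size_map.
have Ein := pushsum_F XsE (mcast_sameinj szX (t_in t)).
have Eout := pushsum_F YsE (mcast_sameinj szY (t_out t)).
pose t' := @Trip _ _ _ _ _ (castH (esym Ein) (esym Eout) (fhom F (t_f t))).
exists (cls t'), t; split; first exact: rep_mem.
exists t'; split; first exact: cls_mem.
split; first exact: mcast_sameinj.
split; first exact: mcast_sameinj.
exact/heq_sym/heq_castH.
Qed.

Variable phi : pinj.

Lemma thX_thF (O : ThOb C) : thX (thF F O) = map (fob F) (thX O).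
Proof. by rewrite /thX /= -!map_comp. Qed.

Lemma thA_thF (O : ThOb C) : thA (thF F O) = thA O.
Proof. by rewrite /thA /= -!map_comp. Qed.

Lemma canon_sameinj (O : ThOb C) : sameinj (canon phi (thF F O)) (canon phi O).
Proof.
split; first by rewrite thX_thF size_map.
by move=> a' a a'a k /=; rewrite thA_thF a'a.
Qed.

Lemma S_thF (O : ThOb C) : fob (S_fun phi D) (thF F O) = fob F (fob (S_fun phi C) O).
Proof. exact: pushsum_F (thX_thF O) (canon_sameinj O). Qed.

Lemma S_hom_SigmaF_image (O O' : ThOb C) (alpha : SMor (thX O) (thX O'))
    (beta : SMor (thX (thF F O)) (thX (thF F O'))) :
  is_SigmaF_image F alpha beta -> heq (S_hom phi beta) (fhom F (S_hom phi alpha)).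
Proof.
case=> t [alpha_t [t' [beta_t' [tin [tout tf]]]]].
rewrite (S_homE HD phi beta_t') (S_homE HC phi alpha_t).
exact: reframe_F (thX_thF O) (thX_thF O') (canon_sameinj O) (canon_sameinj O') tin tout tf.
Qed.

End Naturality.

Theorem lemma3p23 (phi : pinj) :
  (forall C : psdata, is_parsummable C -> is_equivalence (S_fun phi C)) /\
  (forall (C D : psdata) (F : functor C D),
     is_parsummable C -> is_parsummable D -> is_psmor F ->
     (forall O : ThOb C, fob (S_fun phi D) (thF F O) = fob F (fob (S_fun phi C) O)) /\
     (forall (O O' : ThOb C) (alpha : @Hom (Theta phi C) O O'),
        (exists beta : @Hom (Theta phi D) (thF F O) (thF F O'),
            is_SigmaF_image F alpha beta) /\
        (forall beta : @Hom (Theta phi D) (thF F O) (thF F O'),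
            is_SigmaF_image F alpha beta ->
            heq (fhom (S_fun phi D) beta) (fhom F (fhom (S_fun phi C) alpha))))).
Proof.
split=> [C HC | C D F HC HD HF]; first exact: S_fun_equivalence.
split=> [O | O O' alpha]; first exact: S_thF.
split; first exact (SigmaF_image_exists HC HF alpha (thX_thF F O) (thX_thF F O')).
exact: S_hom_SigmaF_image.
Qed.
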